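(* Let $G$ be an arbitrary group and let $S$ be a subgroup of $G$. Then every complement $C$ of $S$ in $G$ (i.e. $SC=G$) contains a minimal complement of $S$ in $G$.
   Context: A nonempty set $W'\subseteq G$ is a complement to $W\subseteq G$ if $WW'=G$ (where $WW'=\{ww':w\in W,w'\in W'\}$); it is a minimal complement if no proper subset of $W'$ is a complement to $W$. *)

Definition is_group {T : Type} (mul : T -> T -> T) (one : T) (inv : T -> T) : Prop :=
  (forall x y z, mul x (mul y z) = mul (mul x y) z) /\
  (forall x, mul one x = x) /\
  (forall x, mul x one = x) /\
  (forall x, mul (inv x) x = one) /\
  (forall x, mul x (inv x) = one).

Definition is_subgroup {T : Type} (mul : T -> T -> T) (one : T) (inv : T -> T)
  (S : T -> Prop) : Prop :=
  S one /\ (forall x y, S x -> S y -> S (mul x y)) /\ (forall x, S x -> S (inv x)).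

Definition setmul {T : Type} (mul : T -> T -> T) (W W' : T -> Prop) : T -> Prop :=
  fun g => exists w w', W w /\ W' w' /\ g = mul w w'.

Definition subset {T : Type} (A B : T -> Prop) : Prop := forall x, A x -> B x.

Definition is_complement {T : Type} (mul : T -> T -> T) (W W' : T -> Prop) : Prop :=
  (exists x, W' x) /\ (forall g, setmul mul W W' g).

Definition is_minimal_complement {T : Type} (mul : T -> T -> T) (W W' : T -> Prop) : Prop :=
  is_complement mul W W' /\
  (forall W'', subset W'' W' -> (exists x, W' x /\ ~ W'' x) -> ~ is_complement mul W W'').

From Stdlib Require Import RelationClasses ClassicalEpsilon.
From Stdlib Require Import FunctionalExtensionality PropExtensionality.

(* A complement C of S meets every right coset S g.  Choosing one point of C in
   each right coset gives a subset M of C that is still a complement, and it is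
   minimal: removing a point m of M leaves the coset S m uncovered, since M has
   no other point in it. *)

Lemma exists_transversal_in {T : Type} {R : T -> T -> Prop} (HR : Equivalence R)
  (C : T -> Prop) :
  (forall g, exists c, C c /\ R g c) ->
  exists M : T -> Prop,
    subset M C /\ (forall g, exists m, M m /\ R g m) /\
    (forall m m', M m -> M m' -> R m m' -> m = m').
Proof.
  intros hC.
  pose (rep g := epsilon (inhabits g) (fun c => C c /\ R g c)).
  assert (rep_spec : forall g, C (rep g) /\ R g (rep g)).
  { intro g; apply epsilon_spec, hC. }
  assert (rep_class : forall g h, R g h -> rep g = rep h).
  { intros g h Hgh; unfold rep.
    replace (fun c => C c /\ R g c) with (fun c => C c /\ R h c).
    - apply epsilon_inh_irrelevance, hC.
    - apply functional_extensionality; intro c; apply propositional_extensionality.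
      split; intros [Hc Hr]; split; trivial.
      + now transitivity h.
      + now transitivity g; [symmetry|]. }
  exists (fun c => exists g, c = rep g).
  split; [| split].
  - intros c [g ->]; apply rep_spec.
  - intro g; exists (rep g); split; [now exists g | apply rep_spec].
  - intros m m' [g ->] [g' ->] Hr.
    apply rep_class.
    transitivity (rep g); [apply rep_spec|].
    transitivity (rep g'); [exact Hr | symmetry; apply rep_spec].
Qed.

Section RightCosets.

Context {T : Type} {mul : T -> T -> T} {one : T} {inv : T -> T}.
Hypothesis hG : is_group mul one inv.
Context {S : T -> Prop}.
Hypothesis hS : is_subgroup mul one inv S.

Lemma mulA x y z : mul x (mul y z) = mul (mul x y) z.
Proof. apply hG. Qed.

Lemma mul1g x : mul one x = x.
Proof. apply hG. Qed.

Lemma mulg1 x : mul x one = x.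
Proof. apply hG. Qed.

Lemma mulVg x : mul (inv x) x = one.
Proof. apply hG. Qed.

Lemma mulgV x : mul x (inv x) = one.
Proof. apply hG. Qed.

Lemma inv_unique a b : mul a b = one -> a = inv b.
Proof.
  intros Hab; rewrite <- (mulg1 a), <- (mulgV b), mulA, Hab, mul1g; reflexivity.
Qed.

Lemma inv_mul_inv x y : inv (mul x (inv y)) = mul y (inv x).
Proof.
  symmetry; apply inv_unique.
  rewrite <- mulA, (mulA (inv x)), mulVg, mul1g, mulgV; reflexivity.
Qed.

Definition same_rcoset (x y : T) : Prop := S (mul x (inv y)).

Lemma same_rcoset_equiv : Equivalence same_rcoset.
Proof.
  destruct hS as [S1 [Smul Sinv]]; unfold same_rcoset.
  split.
  - intro x; rewrite mulgV; exact S1.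
  - intros x y Hxy; rewrite <- inv_mul_inv; now apply Sinv.
  - intros x y z Hxy Hyz.
    replace (mul x (inv z)) with (mul (mul x (inv y)) (mul y (inv z))).
    + now apply Smul.
    + rewrite <- mulA, (mulA (inv y)), mulVg, mul1g; reflexivity.
Qed.

Lemma setmul_rcosetP (M : T -> Prop) g :
  setmul mul S M g <-> exists m, M m /\ same_rcoset g m.
Proof.
  unfold setmul, same_rcoset; split.
  - intros (s & m & Hs & Hm & ->); exists m; split; trivial.
    rewrite <- mulA, mulgV, mulg1; exact Hs.
  - intros (m & Hm & Hgm); exists (mul g (inv m)), m; repeat split; trivial.
    rewrite <- mulA, mulVg, mulg1; reflexivity.
Qed.

Lemma complement_rcosetP (M : T -> Prop) :
  is_complement mul S M <-> forall g, exists m, M m /\ same_rcoset g m.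
Proof.
  unfold is_complement; split.
  - intros [_ HM] g; apply setmul_rcosetP, HM.
  - intros HM; split.
    + destruct (HM one) as [m [Hm _]]; now exists m.
    + intro g; apply setmul_rcosetP, HM.
Qed.

Lemma rcoset_transversal_minimal_complement (M : T -> Prop) :
  is_complement mul S M ->
  (forall m m', M m -> M m' -> same_rcoset m m' -> m = m') ->
  is_minimal_complement mul S M.
Proof.
  intros HM Huniq; split; trivial.
  intros W Hsub [x [Hx HWx]] HW.
  destruct (proj1 (complement_rcosetP W) HW x) as [m [Hm Hxm]].
  apply HWx; rewrite (Huniq x m Hx (Hsub m Hm) Hxm); exact Hm.
Qed.

End RightCosets.

Theorem proposition4p1 (T : Type) (mul : T -> T -> T) (one : T) (inv : T -> T)
  (hG : is_group mul one inv) (S : T -> Prop) (hS : is_subgroup mul one inv S)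
  (C : T -> Prop) (hC : is_complement mul S C) :
  exists M : T -> Prop, subset M C /\ is_minimal_complement mul S M.
Proof.
  destruct (exists_transversal_in (same_rcoset_equiv hG hS) C
             (proj1 (complement_rcosetP hG C) hC))
    as (M & HMC & HMcover & HMuniq).
  exists M; split; trivial.
  apply (rcoset_transversal_minimal_complement hG); trivial.
  now apply (complement_rcosetP hG).
Qed.
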